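(* For every integer $n\ge1$, the class $\mathsf{uSL}_n$ is the logical class generated by the single structure $\mathbf{B}_n=\langle\mathbf{2}^n,P_n\rangle$, where $\mathbf{2}^n$ (the Boolean lattice with $n$ atoms) is regarded as a unital meet semilattice and $P_n$ is its set of non-zero elements. Likewise, $\mathsf{uSL}_\infty$ is the logical class generated by $\{\mathbf{B}_n: n\ge1\}$.
   Context: A unital meet semilattice is an algebra $\langle S,\wedge,1\rangle$ where $\wedge$ is a semilattice operation and $1$ is the top element. Structures are pairs $\langle\mathbf{S},F\rangle$ with $\mathbf{S}$ a unital meet semilattice and $F\subseteq\mathbf{S}$. A homomorphism $h\colon\langle\mathbf{A},F\rangle\to\langle\mathbf{B},G\rangle$ is strict if $F=h^{-1}[G]$. A logical class is a class of structures closed under isomorphism, substructures $\langle\mathbf{B},F\cap\mathbf{B}\rangle$, products $\langle\prod\mathbf{A}_i,\prod F_i\rangle$, strict homomorphic preimages and strict homomorphic images (along surjective strict homomorphisms). For a set $X$, $Y\subseteq_nX$ means $Y$ non-empty, $Y\subseteq X$, $|Y|\le n$. An $n$-filter is an upset $F$ such that for every non-empty finite $X\subseteq F$, if $\bigwedge Y\in F$ for all $Y\subseteq_nX$ then $\bigwedge X\in F$. $\mathsf{uSL}_n$ is the class of all $\langle\mathbf{S},F\rangle$ with $F$ a non-empty $n$-filter, and $\mathsf{uSL}_\infty$ the class with $F$ a non-empty upset. *)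

From Stdlib Require Import List FunctionalExtensionality ProofIrrelevance.
From mathcomp Require Import all_boot.

Set Implicit Arguments.
Unset Strict Implicit.
Unset Printing Implicit Defensive.

Record uSL := USL {
  car : Type;
  meet : car -> car -> car;
  top : car;
  meetA : forall x y z, meet x (meet y z) = meet (meet x y) z;
  meetC : forall x y, meet x y = meet y x;
  meetI : forall x, meet x x = x;
  meetT : forall x, meet x top = x }.

Record Str := MkStr { alg : uSL; filt : car alg -> Prop }.
Arguments filt : clear implicits.
Arguments MkStr : clear implicits.

Definition is_hom (A B : uSL) (h : car A -> car B) : Prop :=
  (forall x y, h (meet x y) = meet (h x) (h y)) /\ h (top A) = top B.

Definition strict_hom (A B : Str) (h : car (alg A) -> car (alg B)) : Prop :=
  is_hom h /\ forall x, filt A x <-> filt B (h x).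

Definition str_iso (A B : Str) : Prop :=
  exists (h : car (alg A) -> car (alg B)) (g : car (alg B) -> car (alg A)),
    @strict_hom A B h /\ (forall x, g (h x) = x) /\ (forall y, h (g y) = y).

Section Sub.
Variables (A : uSL) (P : car A -> Prop)
  (HM : forall x y, P x -> P y -> P (meet x y)) (HT : P (top A)).

Definition sub_meet (x y : {x | P x}) : {x | P x} :=
  exist P (meet (proj1_sig x) (proj1_sig y)) (HM (proj2_sig x) (proj2_sig y)).

Definition sub_uSL : uSL.
Proof.
refine (@USL {x | P x} sub_meet (exist P (top A) HT) _ _ _ _);
  intros; repeat match goal with x : sig _ |- _ => destruct x end;
  apply ProofIrrelevanceTheory.subset_eq_compat; simpl.
- apply meetA.
- apply meetC.
- apply meetI.
- apply meetT.
Defined.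
End Sub.

Definition substr (S : Str) (P : car (alg S) -> Prop)
  (HM : forall x y, P x -> P y -> P (meet x y)) (HT : P (top (alg S))) : Str :=
  MkStr (sub_uSL HM HT) (fun x => filt S (proj1_sig x)).

Definition prod_uSL (I : Type) (A : I -> uSL) : uSL.
Proof.
refine (@USL (forall i, car (A i)) (fun x y i => meet (x i) (y i))
               (fun i => top (A i)) _ _ _ _);
  intros; apply functional_extensionality_dep; intro i.
- apply meetA.
- apply meetC.
- apply meetI.
- apply meetT.
Defined.

Definition prodstr (I : Type) (S : I -> Str) : Str :=
  MkStr (prod_uSL (fun i => alg (S i))) (fun x => forall i, filt (S i) (x i)).

Definition logical_class (C : Str -> Prop) : Prop :=
  (forall A B, str_iso A B -> C A -> C B) /\
  (forall S (P : car (alg S) -> Prop)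
     (HM : forall x y, P x -> P y -> P (meet x y)) (HT : P (top (alg S))),
     C S -> C (substr HM HT)) /\
  (forall (I : Type) (S : I -> Str), (forall i, C (S i)) -> C (prodstr S)) /\
  (forall A B (h : car (alg A) -> car (alg B)), @strict_hom A B h -> C B -> C A) /\
  (forall A B (h : car (alg A) -> car (alg B)),
     @strict_hom A B h -> (forall y, exists x, h x = y) -> C A -> C B).

Definition generated (K : Str -> Prop) (A : Str) : Prop :=
  forall C, logical_class C -> (forall B, K B -> C B) -> C A.

Definition sl_le (A : uSL) (x y : car A) : Prop := meet x y = x.

Definition upset (A : uSL) (F : car A -> Prop) : Prop :=
  forall x y, F x -> sl_le x y -> F y.

Definition bigmeet (A : uSL) (X : list (car A)) : car A := fold_right (@meet A) (top A) X.

(** Finite sets are represented by lists (duplicates are harmless since meet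
    is idempotent, commutative and associative). *)
Definition nfilter (n : nat) (A : uSL) (F : car A -> Prop) : Prop :=
  upset F /\
  forall X : list (car A), X <> nil -> (forall x, List.In x X -> F x) ->
    (forall Y : list (car A), Y <> nil -> (forall y, List.In y Y -> List.In y X) ->
        (length Y <= n)%coq_nat -> F (bigmeet Y)) ->
    F (bigmeet X).

Definition uSLn (n : nat) (S : Str) : Prop :=
  (exists x, filt S x) /\ nfilter n (filt S).

Definition uSLinf (S : Str) : Prop :=
  (exists x, filt S x) /\ upset (filt S).

Definition two_n (n : nat) : uSL :=
  @USL {set 'I_n} (@setI _) setT (@setIA _) (@setIC _) (@setIid _) (@setIT _).

Definition Bn (n : nat) : Str := MkStr (two_n n) (fun A : {set 'I_n} => A != set0).

(* The classes uSL_n and uSL_oo are closed under strict preimages, surjective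
   strict images and products, hence are logical classes, and they contain the
   relevant B_m; this gives one inclusion.  Conversely, let <S, F> be in the
   class.  S is a strict image of the free unital meet semilattice over S
   (finite subsets under union, mapped to their meets).  That free semilattice
   embeds strictly into a product of copies of B_m, one factor for each finite
   list Y with meet outside F, sending a finite set P to the set of positions of
   Y not in P.  This is strict as soon as every finite meet outside F is already
   refuted by such a list Y of an admissible length m: any length for uSL_oo,
   and length n for uSL_n, which is exactly what the n-filter condition says. *)

From Stdlib Require Import List FunctionalExtensionality PropExtensionality.
From Stdlib Require Import ClassicalEpsilon Classical Lia.
From mathcomp Require Import all_boot zify.

Section Order.
Context {A : uSL}.
Implicit Types (x y z : car A) (l : list (car A)).

Lemma sl_le_trans x y z : sl_le x y -> sl_le y z -> sl_le x z.
Proof. by rewrite /sl_le => Hxy Hyz; rewrite -{1}Hxy -meetA Hyz. Qed.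

Lemma sl_le_antisym x y : sl_le x y -> sl_le y x -> x = y.
Proof. by rewrite /sl_le => Hxy Hyx; rewrite -Hxy meetC Hyx. Qed.

Lemma sl_le_meetl x y : sl_le (meet x y) x.
Proof. by rewrite /sl_le meetC meetA meetI. Qed.

Lemma sl_le_meetr x y : sl_le (meet x y) y.
Proof. by rewrite /sl_le -meetA meetI. Qed.

Lemma sl_le_meet x y z : sl_le z x -> sl_le z y -> sl_le z (meet x y).
Proof. by rewrite /sl_le => Hx Hy; rewrite meetA Hx Hy. Qed.

Lemma sl_le_top x : sl_le x (top A).
Proof. exact: meetT. Qed.

Lemma bigmeet_lb l x : In x l -> sl_le (bigmeet l) x.
Proof.
elim: l => [|a l IH] //= [<-|Hx]; first exact: sl_le_meetl.
exact: sl_le_trans (sl_le_meetr _ _) (IH Hx).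
Qed.

Lemma bigmeet_glb l z : (forall x, In x l -> sl_le z x) -> sl_le z (bigmeet l).
Proof.
elim: l => [|a l IH] Hz /=; first exact: sl_le_top.
by apply: sl_le_meet; [apply: Hz; left | apply: IH => x Hx; apply: Hz; right].
Qed.

Lemma bigmeet_eq_mem l l' : (forall x, In x l <-> In x l') -> bigmeet l = bigmeet l'.
Proof.
by move=> E; apply: sl_le_antisym; apply: bigmeet_glb => x Hx; apply: bigmeet_lb; apply/E.
Qed.

Lemma bigmeet_cat l l' : bigmeet (l ++ l') = meet (bigmeet l) (bigmeet l').
Proof. by elim: l => [|a l IH] /=; rewrite ?IH ?meetA // meetC meetT. Qed.

Lemma upset_nonempty_top {F : car A -> Prop} : upset F -> (exists x, F x) -> F (top A).
Proof. by move=> U [x Fx]; apply: U Fx (sl_le_top x). Qed.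

End Order.

Lemma hom_bigmeet {A B : uSL} {h : car A -> car B} (l : list (car A)) :
  is_hom h -> h (bigmeet l) = bigmeet (map h l).
Proof. by case=> hM hT; elim: l => [|a l IH] //=; rewrite hM IH. Qed.

Lemma incl_map_lift {T U : Type} {h : T -> U} {X : list T} {Y : list U} :
  incl Y (map h X) -> exists Y', map h Y' = Y /\ incl Y' X.
Proof.
elim: Y => [|y Y IH] HY; first by exists nil; split; last exact: incl_nil_l.
have /in_map_iff [x [<- Hx]] := HY y (or_introl erefl).
have [Y' [<- HY']] := IH (incl_cons_inv HY).2.
by exists (x :: Y'); split => //; apply: incl_cons.
Qed.

Lemma surj_map_lift {T U : Type} {h : T -> U} (Y : list U) :
  (forall y, exists x, h x = y) -> exists X, map h X = Y.
Proof.
move=> hS; elim: Y => [|y Y [X <-]]; first by exists nil.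
by have [x <-] := hS y; exists (x :: X).
Qed.

(* [nfilter n F] is [upset F /\ nclos n F]. *)
Definition nclos (n : nat) {A : uSL} (F : car A -> Prop) : Prop :=
  forall X : list (car A), X <> nil -> (forall x, In x X -> F x) ->
    (forall Y : list (car A), Y <> nil -> (forall y, In y Y -> In y X) ->
        (length Y <= n)%coq_nat -> F (bigmeet Y)) ->
    F (bigmeet X).

Definition top_upset {A : uSL} (F : car A -> Prop) := upset F /\ F (top A).

Section JointPreimage.
Variable n : nat.
Context {A : uSL} {F : car A -> Prop} {I : Type} {B : I -> uSL}.
Context {G : forall i, car (B i) -> Prop} {h : forall i, car A -> car (B i)}.
Hypothesis h_hom : forall i, is_hom (h i).
Hypothesis F_joint : forall x, F x <-> forall i, G i (h i x).

Lemma top_upset_joint_preim : (forall i, top_upset (G i)) -> top_upset F.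
Proof.
move=> UT; split=> [x y /F_joint Fx Hxy|]; apply/F_joint => i; last first.
  by rewrite (h_hom i).2; case: (UT i).
by apply: (UT i).1 (Fx i) _; rewrite /sl_le -(h_hom i).1 Hxy.
Qed.

Lemma nclos_joint_preim : (forall i, nclos n (G i)) -> nclos n F.
Proof.
move=> N X XN XF HY; apply/F_joint => i; rewrite hom_bigmeet //.
apply: N => [|y /in_map_iff [x [<- Hx]]|Y YN YX Yn].
- by case: X XN {XF HY}.
- exact: (proj1 (F_joint x) (XF x Hx) i).
have [Y' [EY HY']] := incl_map_lift YX.
have Y'N : Y' <> nil by move=> E; apply: YN; rewrite -EY E.
rewrite -EY List.length_map in Yn.
have := proj1 (F_joint _) (HY Y' Y'N HY' Yn) i.
by rewrite hom_bigmeet // EY.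
Qed.

End JointPreimage.

Section StrictImage.
Context {A B : Str} {h : car (alg A) -> car (alg B)}.
Hypotheses (h_strict : strict_hom h) (h_surj : forall y, exists x, h x = y).

Lemma top_upset_strict_img : top_upset (filt A) -> top_upset (filt B).
Proof.
case: h_strict => [[hM hT] hF] [U T]; split; last by rewrite -hT; apply/hF.
move=> y y' Fy Hle; have [x Ex] := h_surj y; have [x' Ex'] := h_surj y'; subst y y'.
rewrite /sl_le -hM in Hle; move: Fy; rewrite -Hle => /hF Fxx'.
by apply/hF; apply: U Fxx' (sl_le_meetr _ _).
Qed.

Lemma nclos_strict_img n : nclos n (filt A) -> nclos n (filt B).
Proof.
case: h_strict => [h_hom hF] N X' XN XF HY.
have [X EX] := surj_map_lift X' h_surj; subst X'.
rewrite -hom_bigmeet //; apply/hF; apply: N => [|x Hx|Y YN YX Yn].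
- by move=> E; apply: XN; rewrite E.
- by apply/hF/XF/in_map.
apply/hF; rewrite hom_bigmeet //; apply: HY; rewrite ?List.length_map //.
- by case: Y YN {YX Yn}.
- by move=> _ /in_map_iff [y [<- Hy]]; apply/in_map/YX.
Qed.

End StrictImage.

Lemma logical_class_intro (C : Str -> Prop) :
  (forall A B (h : car (alg A) -> car (alg B)), strict_hom h -> C B -> C A) ->
  (forall A B (h : car (alg A) -> car (alg B)), strict_hom h ->
     (forall y, exists x, h x = y) -> C A -> C B) ->
  (forall (I : Type) (S : I -> Str), (forall i, C (S i)) -> C (prodstr S)) ->
  logical_class C.
Proof.
move=> Cpre Cimg Cprod; do ![split] => //.
- by move=> A B [h [g [hS [_ hg]]]]; apply: Cimg hS _ => y; exists (g y).
- by move=> S P HM HT; apply: (Cpre (substr HM HT) S (@proj1_sig _ P)).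
Qed.

Section Transport.
Context {Q : forall A : uSL, (car A -> Prop) -> Prop}.
Hypothesis Q_joint_preim : forall (A : uSL) (F : car A -> Prop) I (B : I -> uSL)
  (G : forall i, car (B i) -> Prop) (h : forall i, car A -> car (B i)),
  (forall i, is_hom (h i)) -> (forall x, F x <-> forall i, G i (h i x)) ->
  (forall i, Q _ (G i)) -> Q _ F.

Lemma strict_preim_of_joint {A B : Str} {h : car (alg A) -> car (alg B)} :
  strict_hom h -> Q _ (filt B) -> Q _ (filt A).
Proof.
move=> [h_hom hF] QB.
apply: (@Q_joint_preim _ _ unit (fun=> alg B) (fun=> filt B) (fun=> h)) => // x.
by split=> [/hF | /(_ tt)/hF].
Qed.

Lemma prod_of_joint {I : Type} {S : I -> Str} :
  (forall i, Q _ (filt (S i))) -> Q _ (filt (prodstr S)).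
Proof.
pose ev i (x : car (alg (prodstr S))) : car (alg (S i)) := x i.
by apply: (@Q_joint_preim _ _ I (fun i => alg (S i)) (fun i => filt (S i)) ev).
Qed.

End Transport.

Lemma uSLinfE S : uSLinf S <-> top_upset (filt S).
Proof. by split=> [[N U]|[U T]]; split=> //; [apply: upset_nonempty_top | exists (top _)]. Qed.

Lemma uSLnE n S : uSLn n S <-> top_upset (filt S) /\ nclos n (filt S).
Proof.
split=> [[Ne [U C]] | [[U T] C]]; last by split; [exists (top _) | split].
by split=> //; split=> //; apply: upset_nonempty_top U Ne.
Qed.

Lemma logical_class_uSLinf : logical_class uSLinf.
Proof.
apply: logical_class_intro.
- move=> A B h hS /uSLinfE UB; apply/uSLinfE.
  exact: (strict_preim_of_joint (Q := @top_upset) (@top_upset_joint_preim) hS UB).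
- move=> A B h hS h_surj /uSLinfE UA; apply/uSLinfE.
  exact: top_upset_strict_img hS h_surj UA.
- move=> I S HS; apply/uSLinfE.
  by apply: (prod_of_joint (Q := @top_upset) (@top_upset_joint_preim)) => i; apply/uSLinfE.
Qed.

Lemma logical_class_uSLn n : logical_class (uSLn n).
Proof.
apply: logical_class_intro.
- move=> A B h hS /uSLnE [UB CB]; apply/uSLnE; split.
    exact: (strict_preim_of_joint (Q := @top_upset) (@top_upset_joint_preim) hS UB).
  exact: (strict_preim_of_joint (Q := fun A => @nclos n A) (@nclos_joint_preim n) hS CB).
- move=> A B h hS h_surj /uSLnE [UA CA]; apply/uSLnE; split.
    exact: top_upset_strict_img hS h_surj UA.
  exact: nclos_strict_img hS h_surj n CA.
- move=> I S HS; apply/uSLnE; split.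
    apply: (prod_of_joint (Q := @top_upset) (@top_upset_joint_preim)) => i.
    by case/uSLnE: (HS i).
  apply: (prod_of_joint (Q := fun A => @nclos n A) (@nclos_joint_preim n)) => i.
  by case/uSLnE: (HS i).
Qed.

Lemma length_size (T : Type) (s : list T) : length s = size s.
Proof. by elim: s => //= a s ->. Qed.

Lemma In_mem (T : eqType) (x : T) (s : seq T) : x \in s -> In x s.
Proof. by elim: s => [|a s IH] //=; rewrite inE => /orP [/eqP ->|/IH]; [left|right]. Qed.

Lemma in_bigmeet_two_n n (X : list {set 'I_n}) (i : 'I_n) :
  i \in bigmeet (A := two_n n) X <-> forall x, In x X -> i \in x.
Proof.
elim: X => [|a X IH] /=; first by rewrite inE.
rewrite inE; split=> [/andP [Ha /IH HX] x [<-|] // /HX|HaX] //.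
by rewrite HaX /=; [apply/IH => x Hx; apply: HaX; right | left].
Qed.

Lemma top_upset_Bn n : 0 < n -> top_upset (filt (Bn n)).
Proof.
move=> n_gt0; split=> /= [x y x0 /= xy|]; last by apply/set0Pn; exists (Ordinal n_gt0).
by apply/eqP => y0; move: x0; rewrite -xy /= y0 setI0 eqxx.
Qed.

Lemma nclos_Bn n : 0 < n -> nclos n (filt (Bn n)).
Proof.
move=> n_gt0 X XN XF HY; apply/negP => /eqP X0.
pose w i := odflt setT (List.find (fun x : {set 'I_n} => i \notin x) X).
have Hw i : In (w i) X /\ i \notin w i.
  rewrite /w; case E: List.find => [x|] /=; first exact: find_some E.
  have : i \in bigmeet (A := two_n n) X.
    by apply/in_bigmeet_two_n => x /(find_none _ _ E) /negbFE.
  by rewrite /= X0 inE.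
pose Y := map w (enum 'I_n).
have Y_all i : In (w i) Y by apply/in_map/In_mem; rewrite mem_enum.
have YN : Y <> nil by move: (Y_all (Ordinal n_gt0)) => /[swap] ->.
have YX : incl Y X by move=> _ /in_map_iff [i [<- _]]; case: (Hw i).
have Yn : (length Y <= n)%coq_nat.
  by rewrite List.length_map length_size size_enum_ord.
have /eqP /= := HY Y YN YX Yn; apply; apply/setP => i.
by rewrite inE; apply/negP => /in_bigmeet_two_n /(_ _ (Y_all i)); apply/negP; case: (Hw i).
Qed.

Definition pow_union_uSL (T : Type) : uSL.
Proof.
refine (@USL (T -> Prop) (fun P Q x => P x \/ Q x) (fun _ => False) _ _ _ _);
  by move=> *; apply: functional_extensionality => t;
     apply: propositional_extensionality; tauto.
Defined.

Definition fin_subset {T : Type} (P : T -> Prop) := exists l, forall x, P x <-> In x l.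

Lemma fin_subsetU T (P Q : car (pow_union_uSL T)) :
  fin_subset P -> fin_subset Q -> fin_subset (meet P Q).
Proof. by move=> [l Hl] [l' Hl']; exists (l ++ l') => x /=; rewrite in_app_iff Hl Hl'. Qed.

Lemma fin_subset0 T : fin_subset (top (pow_union_uSL T)).
Proof. by exists nil. Qed.

Definition free_uSL (T : Type) : uSL := sub_uSL (@fin_subsetU T) (@fin_subset0 T).

Section FreeMeet.
Context {A : uSL}.

Definition fin_meet (P : car (free_uSL (car A))) : car A :=
  bigmeet (proj1_sig (constructive_indefinite_description _ (proj2_sig P))).

Lemma fin_meetE {P} l : (forall x, proj1_sig P x <-> In x l) -> fin_meet P = bigmeet l.
Proof.
move=> Pl; rewrite /fin_meet; case: constructive_indefinite_description => l' Pl' /=.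
by apply: bigmeet_eq_mem => x; rewrite -Pl'.
Qed.

Lemma fin_meet_hom : is_hom fin_meet.
Proof.
split=> [[P [l Pl]] [Q [l' Ql']]|]; last by rewrite (fin_meetE nil).
rewrite (fin_meetE (P := exist _ P _) l Pl) (fin_meetE (P := exist _ Q _) l' Ql').
rewrite -bigmeet_cat.
by apply: fin_meetE => x /=; rewrite in_app_iff Pl Ql'.
Qed.

Lemma fin_meet_surj y : exists P, fin_meet P = y.
Proof.
have y_fin : fin_subset (eq^~ y) by exists [:: y] => x /=; intuition.
by exists (exist _ _ y_fin); rewrite (fin_meetE [:: y]) /= ?meetT //; intuition.
Qed.

End FreeMeet.

Definition free_str (S : Str) : Str :=
  MkStr (free_uSL (car (alg S))) (fun P => filt S (fin_meet P)).

Lemma fin_meet_strict S : strict_hom (A := free_str S) fin_meet.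
Proof. by split; first exact: fin_meet_hom. Qed.

Definition classic_bool (P : Prop) : bool :=
  if excluded_middle_informative P then true else false.

Lemma classic_boolP P : reflect P (classic_bool P).
Proof. by rewrite /classic_bool; case: excluded_middle_informative; constructor. Qed.

Definition failure_witnessed (N : nat -> Prop) (S : Str) : Prop :=
  forall l : list (car (alg S)), l <> nil -> ~ filt S (bigmeet l) ->
    exists Y, N (length Y) /\ incl Y l /\ ~ filt S (bigmeet Y).

Section Embedding.
Variables (S : Str) (N : nat -> Prop).
Let T := car (alg S).

Definition refuting_list := {Y : list T | N (length Y) /\ ~ filt S (bigmeet Y)}.

Definition Bn_power : Str := prodstr (fun Y : refuting_list => Bn (length (proj1_sig Y))).

Definition positions_outside (P : car (free_uSL T)) : car (alg Bn_power) :=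
  fun Y => [set i : 'I_(length (proj1_sig Y)) |
             ~~ classic_bool (proj1_sig P (List.nth i (proj1_sig Y) (top _)))].

Lemma positions_outside_hom : is_hom positions_outside.
Proof.
split=> [P Q|]; apply: functional_extensionality_dep => Y; apply/setP => i; rewrite !inE.
  set y := List.nth _ _ _.
  by case: (classic_boolP (proj1_sig P y)); case: (classic_boolP (proj1_sig Q y));
    case: classic_boolP => /=; tauto.
by case: classic_boolP.
Qed.

Hypotheses (S_top_upset : top_upset (filt S)) (S_witnessed : failure_witnessed N S).

Lemma positions_outside_strict : strict_hom (A := free_str S) positions_outside.
Proof.
split; first exact: positions_outside_hom.
case=> P [l Pl]; rewrite /= (fin_meetE l) //; split.
- move=> Fl [Y [NY FY]]; apply/negP => /eqP /setP YP; apply: (FY).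
  apply: S_top_upset.1 Fl _; apply: bigmeet_glb => _ /(In_nth _ _ (top _)) [k [/ltP k_lt <-]].
  apply/bigmeet_lb/Pl/classic_boolP.
  by have := YP (Ordinal k_lt); rewrite !inE => /negbFE.
- move=> Pnz; apply: NNPP => Fl.
  have lN : l <> nil by move=> l0; apply: Fl; rewrite l0; exact: S_top_upset.2.
  have [Y [NY [Yl FY]]] := S_witnessed l lN Fl.
  have /set0Pn [i] := Pnz (exist _ Y (conj NY FY)).
  rewrite inE => /classic_boolP; apply; apply/Pl/Yl/nth_In.
  by apply/ltP; rewrite /= ltn_ord.
Qed.

Lemma witnessed_in_logical_class C : logical_class C ->
  (forall m, N m -> C (Bn m)) -> C S.
Proof.
move=> [_ [_ [C_prod [C_pre C_img]]]] C_Bn.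
apply: (C_img _ _ _ (fin_meet_strict S) fin_meet_surj).
apply: (C_pre _ _ _ positions_outside_strict).
by apply: C_prod => Y; apply: C_Bn; case: (proj2_sig Y).
Qed.

End Embedding.

Arguments witnessed_in_logical_class {S N} _ _ {C}.

Lemma failure_witnessed_pos S : failure_witnessed (fun m => 0 < m) S.
Proof. by move=> [//|x l] _ Fl; exists (x :: l); split=> //; split=> //; apply: incl_refl. Qed.

Lemma nclos_small_failure {n : nat} {A : uSL} {F : car A -> Prop} {l : list (car A)} :
  0 < n -> nclos n F -> l <> nil -> ~ F (bigmeet l) ->
  exists Y, Y <> nil /\ incl Y l /\ (length Y <= n)%coq_nat /\ ~ F (bigmeet Y).
Proof.
move=> n_gt0 Ncl lN Fl.
have [[x [lx Fx]] | lF] := classic (exists x, In x l /\ ~ F x).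
  exists [:: x]; rewrite /= meetT; do !split=> //; last exact/leP.
  by apply: incl_cons => //; apply: incl_nil_l.
apply: NNPP => none; apply: Fl; apply: Ncl => // [x lx | Y YN Yl Yn].
  by apply: NNPP => Fx; apply: lF; exists x.
by apply: NNPP => FY; apply: none; exists Y.
Qed.

Lemma pad_list {T : Type} {Y : list T} {n : nat} : Y <> nil -> (length Y <= n)%coq_nat ->
  exists Y', length Y' = n /\ forall y, In y Y' <-> In y Y.
Proof.
case: Y => [//|d Y] _ Yn; exists ((d :: Y) ++ repeat d (n - length (d :: Y)))%list; split.
  by rewrite length_app repeat_length; lia.
move=> y; rewrite in_app_iff; split=> [[// | y_rep] | ?]; last by left.
by rewrite (repeat_spec _ _ _ y_rep); left.
Qed.

Lemma nclos_witnessed {n : nat} {S : Str} :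
  0 < n -> nclos n (filt S) -> failure_witnessed (eq^~ n) S.
Proof.
move=> n_gt0 Ncl l lN Fl.
have [Y [YN [Yl [Yn FY]]]] := nclos_small_failure n_gt0 Ncl lN Fl.
have [Y' [Y'n Y'Y]] := pad_list YN Yn.
exists Y'; split=> //; split; first by move=> y /Y'Y /Yl.
by rewrite (bigmeet_eq_mem _ _ Y'Y).
Qed.

Theorem mainTheorem14 :
  (forall n : nat, (1 <= n)%coq_nat ->
     forall S : Str, uSLn n S <-> generated (fun B => B = Bn n) S) /\
  (forall S : Str,
     uSLinf S <-> generated (fun B => exists n, (1 <= n)%coq_nat /\ B = Bn n) S).
Proof.
split=> [n /leP n_gt0 S|S]; split.
- case/uSLnE => UT Ncl C CL HK.
  by apply: (witnessed_in_logical_class UT (nclos_witnessed n_gt0 Ncl) CL) => m ->; apply: HK.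
- move=> HG; apply: HG (logical_class_uSLn n) _ => _ ->.
  by apply/uSLnE; split; [exact: top_upset_Bn | exact: nclos_Bn].
- move/uSLinfE => UT C CL HK.
  apply: (witnessed_in_logical_class UT (failure_witnessed_pos S) CL) => m m_gt0.
  by apply: HK; exists m; split=> //; apply/leP.
- move=> HG; apply: HG logical_class_uSLinf _ => _ [m [/leP m_gt0 ->]].
  exact/uSLinfE/top_upset_Bn.
Qed.
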